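(* Let $A_1,A_2\in\mathbf{C}^{n\times n}$. The square bimatrix $\{A_1,A_2\}$ is nonsingular if and only if the complex matrix $$\{A_1,A_2\}_\diamond=\begin{bmatrix}A_1 & A_2^{\#}\\ A_2 & A_1^{\#}\end{bmatrix}\in\mathbf{C}^{2n\times 2n}$$ is nonsingular. Moreover, in that case $\{A_1,A_2\}^{-1}=\{A_3,A_4\}$, where $A_3,A_4\in\mathbf{C}^{n\times n}$ are given by $$\begin{bmatrix}A_3\\ A_4\end{bmatrix}=\left(\{A_1,A_2\}_\diamond\right)^{-1}\begin{bmatrix}I_n\\ 0_{n\times n}\end{bmatrix}.$$
   Context: For a complex matrix $P$, $P^{\#}$ denotes its entrywise complex conjugate. For $A_1,A_2\in\mathbf{C}^{n\times m}$, the bimatrix $\{A_1,A_2\}$ is the (real-linear) map $\mathbf{C}^m\to\mathbf{C}^n$, $x\mapsto A_1x+A_2^{\#}x^{\#}$. Two bimatrices are equal if they coincide as maps. The product of bimatrices is composition of maps: $\{A_1,A_2\}\{B_1,B_2\}x=\{A_1,A_2\}(\{B_1,B_2\}x)$; one has $\{A_1,A_2\}\{B_1,B_2\}=\{A_1B_1+A_2^{\#}B_2,\;A_1^{\#}B_2+A_2B_1\}$. The identity bimatrix is $\mathcal{I}_n=\{I_n,0_{n\times n}\}$ (the identity map on $\mathbf{C}^n$). A square bimatrix $\{A_1,A_2\}$ (with $A_1,A_2\in\mathbf{C}^{n\times n}$) is nonsingular if there exists a bimatrix $\{A_3,A_4\}$ with $\{A_1,A_2\}\{A_3,A_4\}=\{A_3,A_4\}\{A_1,A_2\}=\mathcal{I}_n$;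 then $\{A_3,A_4\}$ is called the inverse $\{A_1,A_2\}^{-1}$. *)

From HB Require Import structures.
From mathcomp Require Import all_boot all_order all_algebra.
From mathcomp Require Import reals.
From mathcomp Require Import complex.
Set Implicit Arguments. Unset Strict Implicit. Unset Printing Implicit Defensive.
Import GRing.Theory Num.Theory.
Local Open Scope ring_scope.

Definition conjmx (R : realType) (m n : nat) (P : 'M[R[i]]_(m, n)) : 'M[R[i]]_(m, n) :=
  map_mx (@conjc R) P.

(* The bimatrix {A1,A2} as the real-linear map x |-> A1 x + A2^# x^# on C^m
   (column vectors). *)
Definition bimx_app (R : realType) (n m : nat) (A1 A2 : 'M[R[i]]_(n, m))
  (x : 'cV[R[i]]_m) : 'cV[R[i]]_n :=
  A1 *m x + conjmx A2 *m conjmx x.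

Definition bimx_inverse_of (R : realType) (n : nat) (A1 A2 B1 B2 : 'M[R[i]]_n) : Prop :=
  (forall x : 'cV[R[i]]_n, bimx_app A1 A2 (bimx_app B1 B2 x) = x) /\
  (forall x : 'cV[R[i]]_n, bimx_app B1 B2 (bimx_app A1 A2 x) = x).

Definition bimx_nonsingular (R : realType) (n : nat) (A1 A2 : 'M[R[i]]_n) : Prop :=
  exists B1 B2 : 'M[R[i]]_n, bimx_inverse_of A1 A2 B1 B2.

Definition bimx_diamond (R : realType) (n : nat) (A1 A2 : 'M[R[i]]_n) : 'M[R[i]]_(n + n) :=
  block_mx A1 (conjmx A2) A2 (conjmx A1).

From Pilot Require Import Defs.
From HB Require Import structures.
From mathcomp Require Import all_boot all_order all_algebra.
From mathcomp Require Import reals.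
From mathcomp Require Import complex.
Import GRing.Theory Num.Theory.
Local Open Scope ring_scope.

(* Composition of bimatrices is again a bimatrix, and a bimatrix map determines
   its coefficients (test it on x and on i x).  Hence {B1,B2} inverts {A1,A2}
   iff the coefficients of the composite are {I,0}; since diamond is
   multiplicative with diamond{I,0} = I and is injective, this happens iff
   {A1,A2}_diamond {B1,B2}_diamond = I.  Conversely, if the diamond is
   invertible, its first block column (A3; A4) already satisfies the equations
   saying that {A1,A2}{A3,A4} = {I,0}. *)

Lemma mulmx_cVP (F : fieldType) m n (A B : 'M[F]_(m, n)) :
  (forall x : 'cV_n, A *m x = B *m x) -> A = B.
Proof.
move=> eqAB; apply/trmx_inj/eqP/mulmxP => u.
by rewrite -[u]trmxK -!trmx_mul eqAB.
Qed.

Section Bimatrix.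
Variable R : realType.
Local Notation C := R[i].
(* all_algebra exports an unrelated [conjmx] (matrix conjugation in mxred). *)
Local Notation conjmx := Defs.conjmx.

Lemma conjc_i : conjc ('i%C : C) = - 'i%C.
Proof. by apply/eqP; rewrite eq_complex /= oppr0 !eqxx. Qed.

Lemma conjmx0 m n : conjmx (0 : 'M[C]_(m, n)) = 0.
Proof. exact: map_mx0. Qed.

Lemma conjmx1 n : conjmx (1%:M : 'M[C]_n) = 1%:M.
Proof. exact: map_mx1. Qed.

Lemma conjmxK m n (A : 'M[C]_(m, n)) : conjmx (conjmx A) = A.
Proof. by apply/matrixP => i j; rewrite !mxE conjcK. Qed.

Lemma conjmxD m n (A B : 'M[C]_(m, n)) : conjmx (A + B) = conjmx A + conjmx B.
Proof. exact: map_mxD. Qed.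

Lemma conjmxB m n (A B : 'M[C]_(m, n)) : conjmx (A - B) = conjmx A - conjmx B.
Proof. exact: map_mxB. Qed.

Lemma conjmxM m n p (A : 'M[C]_(m, n)) (B : 'M[C]_(n, p)) :
  conjmx (A *m B) = conjmx A *m conjmx B.
Proof. exact: map_mxM. Qed.

Lemma conjmxZ m n a (A : 'M[C]_(m, n)) : conjmx (a *: A) = conjc a *: conjmx A.
Proof. exact: map_mxZ. Qed.

Lemma bimx_app1 n (x : 'cV[C]_n) : bimx_app 1%:M 0 x = x.
Proof. by rewrite /bimx_app mul1mx conjmx0 mul0mx addr0. Qed.

Lemma bimx_appB n m (A1 A2 B1 B2 : 'M[C]_(n, m)) x :
  bimx_app (A1 - B1) (A2 - B2) x = bimx_app A1 A2 x - bimx_app B1 B2 x.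
Proof. by rewrite /bimx_app conjmxB !mulmxBl addrACA opprD. Qed.

Lemma bimx_app_comp n m p (A1 A2 : 'M[C]_(n, m)) (B1 B2 : 'M[C]_(m, p)) x :
  bimx_app A1 A2 (bimx_app B1 B2 x) =
  bimx_app (A1 *m B1 + conjmx A2 *m B2) (conjmx A1 *m B2 + A2 *m B1) x.
Proof.
rewrite /bimx_app !conjmxD !conjmxM !conjmxK !mulmxDr !mulmxDl !mulmxA.
by rewrite -!addrA; congr (_ + _); rewrite [RHS]addrC !addrA.
Qed.

Lemma bimx_app_eq0 n m (A1 A2 : 'M[C]_(n, m)) :
  (forall x, bimx_app A1 A2 x = 0) -> A1 = 0 /\ A2 = 0.
Proof.
rewrite /bimx_app => app0.
have app0_i (x : 'cV_m) : A1 *m x - conjmx A2 *m conjmx x = 0.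
  have /eqP := app0 ('i%C *: x).
  rewrite conjmxZ conjc_i scaleNr mulmxN -!scalemxAr -scalerBr scaler_eq0.
  by rewrite eq_complex /= eqxx oner_eq0 => /eqP.
have A1_0 : A1 = 0.
  apply: mulmx_cVP => x; rewrite mul0mx; apply/eqP.
  have := congr2 +%R (app0 x) (app0_i x).
  rewrite addr0 addrACA subrr addr0 -mulr2n -scaler_nat => /eqP.
  by rewrite scaler_eq0 pnatr_eq0.
have cA2_0 : conjmx A2 = 0.
  apply: mulmx_cVP => x; rewrite mul0mx -(app0 (conjmx x)) A1_0 mul0mx add0r.
  by rewrite conjmxK.
by split=> //; rewrite -[A2]conjmxK cA2_0 conjmx0.
Qed.

Lemma bimx_app_inj n m (A1 A2 B1 B2 : 'M[C]_(n, m)) :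
  (forall x, bimx_app A1 A2 x = bimx_app B1 B2 x) -> A1 = B1 /\ A2 = B2.
Proof.
move=> eqAB; have [] := @bimx_app_eq0 _ _ (A1 - B1) (A2 - B2).
  by move=> x; rewrite bimx_appB eqAB subrr.
by move=> /subr0_eq -> /subr0_eq ->.
Qed.

Lemma bimx_diamond_mul n (A1 A2 B1 B2 : 'M[C]_n) :
  bimx_diamond A1 A2 *m bimx_diamond B1 B2 =
  bimx_diamond (A1 *m B1 + conjmx A2 *m B2) (conjmx A1 *m B2 + A2 *m B1).
Proof.
rewrite /bimx_diamond mulmx_block !conjmxD !conjmxM !conjmxK.
by congr block_mx; rewrite addrC.
Qed.

Lemma bimx_diamond_eq1 n (P Q : 'M[C]_n) :
  bimx_diamond P Q = 1%:M <-> P = 1%:M /\ Q = 0.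
Proof.
rewrite /bimx_diamond scalar_mx_block; split.
  by case/eq_block_mx.
by case=> -> ->; rewrite conjmx0 conjmx1.
Qed.

Lemma bimx_comp_idP n (A1 A2 B1 B2 : 'M[C]_n) :
  (forall x, bimx_app A1 A2 (bimx_app B1 B2 x) = x) <->
  bimx_diamond A1 A2 *m bimx_diamond B1 B2 = 1%:M.
Proof.
rewrite bimx_diamond_mul; split=> [id_comp | /bimx_diamond_eq1[eq1 eq0] x].
  by apply/bimx_diamond_eq1/bimx_app_inj => x; rewrite -bimx_app_comp bimx_app1.
by rewrite bimx_app_comp eq1 eq0 bimx_app1.
Qed.

Lemma bimx_inverse_ofP n (A1 A2 B1 B2 : 'M[C]_n) :
  bimx_inverse_of A1 A2 B1 B2 <->
  bimx_diamond A1 A2 *m bimx_diamond B1 B2 = 1%:M.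
Proof.
split=> [[/bimx_comp_idP //] | DAB].
by split; apply/bimx_comp_idP => //; apply: mulmx1C.
Qed.

Lemma bimx_inverse_of_col n (A1 A2 B1 B2 : 'M[C]_n) :
  bimx_diamond A1 A2 *m col_mx B1 B2 = col_mx 1%:M 0 ->
  bimx_inverse_of A1 A2 B1 B2.
Proof.
rewrite /bimx_diamond mul_block_col => DB; case/eq_col_mx: DB => eq1 eq0.
apply/bimx_inverse_ofP; rewrite bimx_diamond_mul; apply/bimx_diamond_eq1.
by split; last rewrite addrC.
Qed.

End Bimatrix.

Theorem lemma1 (R : realType) (n : nat) (A1 A2 : 'M[R[i]]_n) :
  (bimx_nonsingular A1 A2 <-> bimx_diamond A1 A2 \in unitmx) /\
  (bimx_diamond A1 A2 \in unitmx ->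
   let X := invmx (bimx_diamond A1 A2) *m (col_mx (1%:M : 'M[R[i]]_n) 0) in
   bimx_inverse_of A1 A2 (usubmx X) (dsubmx X)).
Proof.
have inverse_of_col : bimx_diamond A1 A2 \in unitmx ->
    let X := invmx (bimx_diamond A1 A2) *m (col_mx (1%:M : 'M[R[i]]_n) 0) in
    bimx_inverse_of A1 A2 (usubmx X) (dsubmx X).
  by move=> unitD X; apply: bimx_inverse_of_col; rewrite vsubmxK mulKVmx.
split=> //; split=> [[B1 [B2 /bimx_inverse_ofP /mulmx1_unit[]]] // | unitD].
by do 2 eexists; exact: inverse_of_col unitD.
Qed.
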